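(* Let $\lambda$ be an integer partition of length $k$ with $\lambda^{\perp B}\neq\emptyset$. Then $\lambda$ is novel if and only if the matrix $A^{(\lambda)}$ has rank $k-1$ and $\gcd(\lambda_1,\dots,\lambda_k)=1$.
   Context: An integer partition is $\lambda=(\lambda_1,\dots,\lambda_k)$ with integers $\lambda_1\ge\dots\ge\lambda_k\ge 1$; $k$ is its length. For $v\in\mathbb{Z}^k$ let $v^{\perp B}=\{x\in\{-1,1\}^k: v\cdot x=0\}$; for a partition, $\lambda^{\perp B}$ is this set for $(\lambda_1,\dots,\lambda_k)$. If $|\lambda^{\perp B}|=2p>0$, $A^{(\lambda)}$ is the $k\times p$ matrix whose columns are the elements of $\lambda^{\perp B}$ with first coordinate $+1$. $V_\lambda\subset\mathbb{Z}^k$ is the set of vectors obtained from $(\lambda_1,\dots,\lambda_k)$ by permuting coordinates and changing signs of some coordinates, with first coordinate positive. For $I\subset\{1,\dots,m\}$, $\mathrm{Proj}_I:\{-1,1\}^m\to\{-1,1\}^{|I|}$ keeps the coordinates indexed by $I$. Reduction: for partitions $\mu$ of length $m$ and $\lambda$ of length $k\le m$, $\mu\Rightarrow\lambda$ iff there exist $I\subset\{1,\dots,m\}$, $|I|=k$, and $v\in V_\lambda$ with $\mathrm{Proj}_I(\mu^{\perp B})\subset v^{\perp B}$. $\mu$ strictly reduces to $\lambda$ iff $\mu\Rightarrow\lambda$ and not $\lambda\Rightarrow\mu$. Partitions $\lambda,\mu$ of the same length are equivalent iff there is $w\in V_\mu$ with $\lambda^{\perp B}=w^{\perp B}$. A partition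 $\lambda$ is novel iff $\lambda^{\perp B}\neq\emptyset$, $\lambda$ strictly reduces to no partition, and $\lambda$ is lexicographically smallest among partitions equivalent to it. *)

From HB Require Import structures.
From mathcomp Require Import all_boot all_order all_fingroup all_algebra.
Set Implicit Arguments. Unset Strict Implicit. Unset Printing Implicit Defensive.
Import Order.TTheory GRing.Theory Num.Theory.

Definition is_partition (l : seq nat) : bool :=
  [&& 0 < size l, sorted geq l & all (fun a => 0 < a) l].

(* Sign vectors in {-1,1}^k are encoded as {ffun 'I_k -> bool}, true = +1. *)
Definition signv (b : bool) : int := if b then 1%R else (-1)%R.

(* v^{perp B} for v : Z^k (given as a seq int of size k). *)
Definition perpB (k : nat) (v : seq int) : {set {ffun 'I_k -> bool}} :=
  [set x : {ffun 'I_k -> bool} | (\sum_(i < k) nth 0%R v i * signv (x i))%R == 0%R].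

Definition pvec (l : seq nat) : seq int := map Posz l.

Definition lamperp (l : seq nat) := perpB (size l) (pvec l).

Definition inV (l : seq nat) (v : seq int) : Prop :=
  [/\ size v = size l,
      exists (s : 'S_(size l)) (e : 'I_(size l) -> bool),
        forall i : 'I_(size l), nth 0%R v i = (signv (e i) * nth 0%R (pvec l) (s i))%R
    & (0 < nth 0%R v 0)%R].

(* mu => lambda ; I is given by a strictly increasing map f : 'I_k -> 'I_m *)
Definition reduces (mu l : seq nat) : Prop :=
  size l <= size mu /\
  exists f : 'I_(size l) -> 'I_(size mu),
    (forall i j : 'I_(size l), i < j -> f i < f j) /\
    exists v, inV l v /\
      forall x, x \in lamperp mu -> [ffun j => x (f j)] \in perpB (size l) v.

Definition strictly_reduces (mu l : seq nat) : Prop :=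
  reduces mu l /\ ~ reduces l mu.

Definition equivalent (l mu : seq nat) : Prop :=
  size l = size mu /\ exists w, inV mu w /\ lamperp l = perpB (size l) w.

Fixpoint lexle (s t : seq nat) : bool :=
  match s, t with
  | [::], _ => true
  | _ :: _, [::] => false
  | a :: s', b :: t' => (a < b) || ((a == b) && lexle s' t')
  end.

Definition novel (l : seq nat) : Prop :=
  [/\ lamperp l != set0,
      (forall mu, is_partition mu -> ~ strictly_reduces l mu)
    & (forall mu, is_partition mu -> equivalent l mu -> lexle l mu)].

(* columns of A^(lambda): elements of lambda^{perp B} with first coordinate +1 *)
Definition Apos (l : seq nat) : {set {ffun 'I_(size l) -> bool}} :=
  [set x in lamperp l | [forall i : 'I_(size l), (val i == 0) ==> x i]].

(* A^(lambda) as a rational k x p matrix (column order: enumeration order) *)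
Definition Amat (l : seq nat) : 'M[rat]_(size l, #|Apos l|) :=
  \matrix_(i < size l, j < #|Apos l|) ((signv (enum_val j i))%:~R : rat).

Definition gcd_seq (l : seq nat) : nat := foldr gcdn 0 l.

(* Everything turns on the left kernel of A^(lambda): the rational row vectors
   u with u.x = 0 for every x in lambda^{perp B} (columns of A are exactly the
   elements of lambda^{perp B} up to sign).  lambda itself lies in it, so
   rank A <= k-1, and rank A = k-1 iff the kernel is the line Q.lambda.
   - If the kernel is larger, it contains a nonzero integral vector vanishing
     at the first coordinate; the absolute values of its nonzero entries,
     sorted, form a shorter partition mu to which lambda strictly reduces.
   - If gcd(lambda) = g > 1, lambda/g is an equivalent, lexicographically
     smaller partition.
   - Conversely, if the kernel is Q.lambda, any reduction lambda => mu or
     equivalence lambda ~ mu pulls back to a kernel vector c.lambda; sorting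
     forces mu = |c|.lambda, so mu => lambda, and for an equivalence gcd = 1
     makes |c| a positive integer, whence lambda <=lex mu. *)
From HB Require Import structures.
From mathcomp Require Import all_boot all_order all_fingroup all_algebra zify.
Set Implicit Arguments. Unset Strict Implicit. Unset Printing Implicit Defensive.
Import Order.TTheory GRing.Theory Num.Theory.
Local Open Scope ring_scope.

Lemma signvN b : signv (~~ b) = - signv b.
Proof. by case: b. Qed.

Lemma signv_neq0 b : signv b != 0.
Proof. by case: b. Qed.

Lemma signv_abs (w : int) : w = signv (0 <= w) * `|w|%N.
Proof. by case: w => n /=; rewrite ?mul1r // NegzE mulN1r. Qed.

Lemma abszM_signv b (n : nat) : absz (signv b * Posz n) = n.
Proof. by case: b; rewrite ?mul1r ?mulN1r ?abszN. Qed.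

Lemma sum_signv_rat k (v : 'I_k -> int) (x : {ffun 'I_k -> bool}) :
  ((\sum_i v i * signv (x i)) == 0) =
  ((\sum_i (v i)%:~R * (signv (x i))%:~R : rat) == 0).
Proof.
rewrite -(intr_eq0 rat) rmorph_sum /=.
by under eq_bigr do rewrite intrM.
Qed.

Lemma in_perpB k v x : (x \in perpB k v) =
  ((\sum_(i < k) ((nth 0 v i)%:~R * (signv (x i))%:~R : rat)) == 0).
Proof. by rewrite inE sum_signv_rat. Qed.

Lemma nth_pvec l (i : nat) : nth 0 (pvec l) i = Posz (nth 0%N l i).
Proof.
rewrite /pvec; case: (ltnP i (size l)) => H; first by rewrite (nth_map 0%N).
by rewrite !nth_default ?size_map.
Qed.

Lemma in_perpB_pvec k l x : (x \in perpB k (pvec l)) =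
  ((\sum_(i < k) ((nth 0%N l i)%:R * (signv (x i))%:~R : rat)) == 0).
Proof. rewrite in_perpB; by under eq_bigr do rewrite nth_pvec. Qed.

Lemma in_lamperp l x : (x \in lamperp l) =
  ((\sum_(i < size l) ((nth 0%N l i)%:R * (signv (x i))%:~R : rat)) == 0).
Proof. exact: in_perpB_pvec. Qed.

Lemma perpB_cast m n (E : n = m) v (x : {ffun 'I_m -> bool}) :
  ([ffun j => x (cast_ord E j)] \in perpB n v) = (x \in perpB m v).
Proof.
subst m; set y := [ffun j => _]; suff -> : y = x by [].
by apply/ffunP => j; rewrite ffunE; congr (x _); apply: val_inj.
Qed.

Lemma perpB_scale k l mu (r : rat) : r != 0 ->
  (forall i, (nth 0%N l i)%:R = r * (nth 0%N mu i)%:R) ->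
  perpB k (pvec l) = perpB k (pvec mu).
Proof.
move=> r0 Hlmu; apply/setP => x; rewrite !in_perpB_pvec.
under eq_bigr do rewrite Hlmu -mulrA.
by rewrite -mulr_sumr mulf_eq0 (negbTE r0).
Qed.

Definition negv k (x : {ffun 'I_k -> bool}) : {ffun 'I_k -> bool} :=
  [ffun i => ~~ x i].

Lemma sum_negv k (u : 'I_k -> rat) x :
  \sum_i u i * (signv (negv x i))%:~R = - \sum_i u i * (signv (x i))%:~R.
Proof.
rewrite -sumrN; apply: eq_bigr => i _; by rewrite ffunE signvN intrN mulrN.
Qed.

Lemma lamperp_negv l x : x \in lamperp l -> negv x \in lamperp l.
Proof. by rewrite !in_lamperp sum_negv oppr_eq0. Qed.

Lemma lamperp_Apos l x : x \in lamperp l ->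
  exists2 y, y \in Apos l & (y = x \/ y = negv x).
Proof.
move=> Hx.
case: (boolP [forall i : 'I_(size l), (val i == 0%N) ==> x i]) => H.
  by exists x; [rewrite inE Hx H | left].
exists (negv x); last by right.
rewrite inE lamperp_negv //=; apply/forallP => i; apply/implyP => /eqP i0.
move/forallPn: H => [j]; rewrite negb_imply => /andP [/eqP j0 xj].
have -> : i = j by apply: val_inj; rewrite /= i0 j0.
by rewrite ffunE.
Qed.

Lemma part_size l : is_partition l -> (0 < size l)%N.
Proof. by case/and3P. Qed.

Lemma part_pos l i : is_partition l -> (i < size l)%N -> (0 < nth 0%N l i)%N.
Proof. by case/and3P => _ _ /all_nthP H Hi; exact: H. Qed.

Lemma inV_pvec l : is_partition l -> inV l (pvec l).
Proof.
move=> Hl; split; first by rewrite size_map.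
  by exists 1%g, (fun _ => true) => i; rewrite perm1 mul1r.
by rewrite nth_pvec ltz_nat part_pos ?part_size.
Qed.

Lemma inV_abs_perm mu v : inV mu v -> perm_eq (map absz v) mu.
Proof.
case=> Hsz [s [e Hse]] _; apply/(tuple_permP (t := in_tuple mu)); exists s.
apply: (@eq_from_nth _ 0%N); first by rewrite size_map size_tuple Hsz.
move=> a; rewrite size_map Hsz => Ha.
rewrite (nth_map 0) ?Hsz // -[a]/(val (Ordinal Ha)) -tnth_nth tnth_mktuple.
by rewrite (tnth_nth 0%N) Hse nth_pvec abszM_signv.
Qed.

Lemma inV_sort_abs (w : seq int) :
  0 < nth 0 w 0 -> inV (sort geq (map absz w)) w.
Proof.
set mu := sort geq _ => w0; split=> //; first by rewrite size_sort size_map.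
have /tuple_permP [p Hp] : perm_eq (map absz w) (in_tuple mu).
  by rewrite perm_sym perm_sort.
exists p, (fun a : 'I_(size mu) => 0 <= nth 0 w a) => a.
have Ha : (a < size w)%N.
  have Hsz : size mu = size w by rewrite size_sort size_map.
  by rewrite -Hsz.
have Hwa : nth 0%N mu (p a) = absz (nth 0 w a).
  by rewrite -(nth_map 0 0%N) // Hp -tnth_nth tnth_mktuple (tnth_nth 0%N).
by rewrite nth_pvec Hwa -signv_abs.
Qed.

Lemma sort_abs_partition (w : seq int) :
  w != [::] -> all (fun z => z != 0) w -> is_partition (sort geq (map absz w)).
Proof.
move=> w_nil w_nz; apply/and3P; split.
- by rewrite size_sort size_map lt0n size_eq0.
- by apply: sort_sorted => a b; exact: leq_total.
- apply/allP => a; rewrite mem_sort => /mapP [z Hz ->].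
  by rewrite absz_gt0 (allP w_nz).
Qed.

Lemma Amat_kerP l (u : 'rV[rat]_(size l)) :
  (u *m Amat l = 0) <->
  (forall x, x \in lamperp l -> \sum_i u 0 i * (signv (x i))%:~R = 0).
Proof.
have column y (Hy : y \in Apos l) :
    (u *m Amat l) 0 (enum_rank_in Hy y) = \sum_i u 0 i * (signv (y i))%:~R.
  by rewrite mxE; apply: eq_bigr => i _; rewrite mxE enum_rankK_in.
split.
- move/rowP=> Hu x /lamperp_Apos [y Hy [<-|Hyx]].
  + by rewrite -column Hu mxE.
  + by apply/eqP; rewrite -oppr_eq0 -sum_negv -Hyx -column Hu mxE.
- move=> H; apply/rowP => j; rewrite !mxE.
  have /setIdP [Hj _] := enum_valP j.
  by apply: etrans (H _ Hj); apply: eq_bigr => i _; rewrite mxE.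
Qed.

Definition lrow l : 'rV[rat]_(size l) := \row_i ((nth 0%N l i)%:R).

Lemma lrow_ker l : lrow l *m Amat l = 0.
Proof.
apply/Amat_kerP => x; rewrite in_lamperp => /eqP H; apply: etrans H.
by apply: eq_bigr => i _; rewrite mxE.
Qed.

Lemma lrow0_neq0 l (Hl : is_partition l) : lrow l 0 (Ordinal (part_size Hl)) != 0.
Proof. by rewrite mxE pnatr_eq0 -lt0n part_pos. Qed.

Lemma lrow_neq0 l (Hl : is_partition l) : lrow l != 0.
Proof. by apply: contraNneq (lrow0_neq0 Hl) => ->; rewrite mxE. Qed.

Lemma ker_line l : is_partition l -> \rank (Amat l) = (size l).-1 ->
  forall u : 'rV_(size l), u *m Amat l = 0 -> exists c : rat, u = c *: lrow l.
Proof.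
move=> Hl Hr u Hu.
have uK : (u <= kermx (Amat l))%MS by apply/sub_kermxP.
have lK : (lrow l <= kermx (Amat l))%MS by apply/sub_kermxP; exact: lrow_ker.
have rK : \rank (kermx (Amat l)) = 1%N.
  by rewrite mxrank_ker Hr; have := part_size Hl; case: (size l) => // n _; lia.
have := mxrank_leqif_eq lK; rewrite rank_rV lrow_neq0 // rK /= => /leqif_refl.
case/andP => _ Kl; apply/sub_rVP; exact: submx_trans uK Kl.
Qed.

(* Otherwise the kernel has dimension at least 2, so it contains a nonzero
   vector vanishing at the first coordinate. *)
Lemma ker_plane l (Hl : is_partition l) : \rank (Amat l) != (size l).-1 ->
  exists z : 'rV[rat]_(size l),
    [/\ z *m Amat l = 0, z != 0 & z 0 (Ordinal (part_size Hl)) = 0].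
Proof.
move=> Hr; set K := kermx (Amat l); set i0 := Ordinal (part_size Hl).
have lK : (lrow l <= K)%MS by apply/sub_kermxP; exact: lrow_ker.
have rK2 : (2 <= \rank K)%N.
  have := mxrankS lK; rewrite rank_rV lrow_neq0 //= /K mxrank_ker.
  have := rank_leq_row (Amat l); move: Hr (part_size Hl); lia.
have /row_subPn [i Hi] : ~~ (K <= lrow l)%MS.
  by apply/negP => /mxrankS; rewrite rank_rV lrow_neq0 //=; lia.
have uA : row i K *m Amat l = 0 by apply/sub_kermxP; exact: row_sub.
move: (row i K) uA Hi => u uA Hu.
exists (lrow l 0 i0 *: u - u 0 i0 *: lrow l); split.
- by rewrite mulmxBl -!scalemxAl uA lrow_ker !scaler0 subr0.
- apply: contraNneq Hu => /eqP; rewrite subr_eq0 => /eqP Hu; apply/sub_rVP.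
  exists (u 0 i0 / lrow l 0 i0).
  by rewrite mulrC -scalerA -Hu scalerA mulVf ?lrow0_neq0 // scale1r.
- by rewrite !mxE mulrC subrr.
Qed.

Lemma signv_mul_gt0 (z : int) : signv (0 < z) * z = `|z|.
Proof. by case: z => [[|n]|n]; rewrite ?mul1r // NegzE mulN1r opprK. Qed.

(* A nonzero integral vector Z orthogonal to lambda^{perp B} and vanishing
   somewhere gives a strict reduction: restrict to the support S of Z (so
   |S| < k) and take for mu the sorted |Z_i|, i in S; the restriction of Z,
   normalised to a positive first entry, lies in V_mu. *)
Lemma annihilator_reduction l (Z : 'I_(size l) -> int) (i0 : 'I_(size l)) :
  Z i0 = 0 -> (exists i, Z i != 0) ->
  (forall x, x \in lamperp l -> \sum_i Z i * signv (x i) = 0) ->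
  exists2 mu, is_partition mu & strictly_reduces l mu.
Proof.
move=> Z0 [i1 Zi1] HZ.
set supp := [seq i <- enum 'I_(size l) | Z i != 0].
have supp_lt : (size supp < size l)%N.
  rewrite size_filter -[X in (_ < X)%N](size_enum_ord (size l)).
  rewrite -(count_predC (fun i => Z i != 0)) -addn1 leq_add2l -has_count.
  by apply/hasP; exists i0; rewrite ?mem_enum //= Z0 eqxx.
have supp_gt : (0 < size supp)%N.
  by rewrite size_filter -has_count; apply/hasP; exists i1; rewrite ?mem_enum.
have supp_sorted : sorted (fun i j : 'I_(size l) => (i < j)%N) supp.
  apply: sorted_filter; first by move=> a b c; exact: ltn_trans.
  by have := iota_ltn_sorted 0 (size l); rewrite -val_enum_ord sorted_map.
pose sg : int := signv (0 < Z (nth i0 supp 0)).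
pose w := [seq sg * Z i | i <- supp].
set mu := sort geq (map absz w).
have size_mu : size mu = size supp by rewrite size_sort !size_map.
have nth_w a : (a < size supp)%N -> nth 0 w a = sg * Z (nth i0 supp a).
  by move=> Ha; rewrite (nth_map i0).
have Hmu : is_partition mu.
  apply: sort_abs_partition; first by rewrite -size_eq0 size_map -lt0n.
  apply/allP => _ /mapP [i Hi ->]; rewrite mulf_neq0 ?signv_neq0 //.
  by move: Hi; rewrite mem_filter => /andP [].
exists mu => //; split; last first.
  by case=> Hle _; move: Hle; rewrite size_mu leqNgt supp_lt.
split; first by rewrite size_mu ltnW.
pose f (a : 'I_(size mu)) := nth i0 supp a.
exists f; split.
  move=> a b Hab; apply: (sorted_ltn_nth _ i0 supp_sorted) => //.
  - by move=> x y z; exact: ltn_trans.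
  - by rewrite inE -size_mu.
  - by rewrite inE -size_mu.
exists w; split.
  apply: inV_sort_abs; rewrite nth_w // signv_mul_gt0 normr_gt0.
  by have := mem_nth i0 supp_gt; rewrite mem_filter => /andP [].
move=> x Hx; rewrite inE.
pose F i := Z i * signv (x i).
have Esupp : \sum_(i <- supp) F i = \sum_i F i.
  rewrite big_filter big_enum_cond /=.
  rewrite [RHS](bigID (fun i => Z i != 0)) /= [X in _ = _ + X]big1 ?addr0 //.
  by move=> i /negPn /eqP Zi; rewrite /F Zi mul0r.
have Ew : \sum_(a < size mu) nth 0 w a * signv ([ffun j => x (f j)] a)
          = sg * \sum_(i <- supp) F i.
  rewrite mulr_sumr (big_nth i0) -size_mu big_mkord; apply: eq_bigr => a _.
  by rewrite ffunE nth_w ?mulrA // -size_mu.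
by rewrite Ew Esupp HZ // mulr0.
Qed.

Lemma scale_to_int k (z : 'I_k -> rat) :
  exists2 D : rat, D != 0 & exists Z : 'I_k -> int, forall i, (Z i)%:~R = D * z i.
Proof.
exists (\prod_j (denq (z j))%:~R).
  by rewrite prodf_seq_neq0; apply/allP => j _; rewrite intr_eq0 denq_neq0.
exists (fun i => numq (z i) * \prod_(j | j != i) denq (z j)) => i.
rewrite intrM rmorph_prod /= [in RHS](bigD1 i) //= numqE.
by rewrite [RHS]mulrC mulrA.
Qed.

Lemma no_strict_reduction_rank l : is_partition l ->
  (forall mu, is_partition mu -> ~ strictly_reduces l mu) ->
  \rank (Amat l) = (size l).-1.
Proof.
move=> Hl Hnr; apply/eqP; apply: contraT => Hr.
have [z [zA z0 zi0]] := ker_plane Hl Hr.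
have [D D0 [Z HZ]] := scale_to_int (z 0).
have /existsP [i zi] : [exists i, z 0 i != 0].
  apply: contraNT z0 => /existsPn Hz; apply/eqP/rowP => i.
  by rewrite mxE; apply/eqP/negPn/Hz.
have [|||mu Hmu Hs] := @annihilator_reduction l Z (Ordinal (part_size Hl)).
- by apply/eqP; rewrite -(intr_eq0 rat) HZ zi0 mulr0.
- by exists i; rewrite -(intr_eq0 rat) HZ mulf_neq0.
- move=> x Hx; apply/eqP; rewrite sum_signv_rat.
  under eq_bigr do rewrite HZ -mulrA.
  by rewrite -mulr_sumr (proj1 (Amat_kerP z) zA x Hx) mulr0.
by case: (Hnr mu Hmu Hs).
Qed.

Lemma gcd_seq_dvd l i : (gcd_seq l %| nth 0%N l i)%N.
Proof.
elim: l i => [|a s IH] [|i] //=; first exact: dvdn_gcdl.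
exact: dvdn_trans (dvdn_gcdr _ _) (IH i).
Qed.

(* If c.lambda_i is an integer for every i, so is c.gcd(lambda) (Bezout). *)
Lemma gcd_seq_int l (c : rat) :
  (forall i, (i < size l)%N -> c * (nth 0%N l i)%:R \is a Num.int) ->
  c * (gcd_seq l)%:R \is a Num.int.
Proof.
elim: l => [|a s IH] H /=; first by rewrite mulr0 rpred0.
have Ha := H 0%N isT.
have Hs := IH (fun i Hi => H i.+1 Hi).
case: (Bezoutz a (gcd_seq s)) => u [v E].
have -> : (gcdn a (gcd_seq s))%:R = ((gcdz a (gcd_seq s))%:~R : rat) by [].
rewrite -E rmorphD !rmorphM /= mulrDr !mulrA ![c * _]mulrC -!mulrA.
by rewrite rpredD // rpredM // intr_int.
Qed.

(* If lambda has gcd g > 1 then lambda/g is an equivalent partition that is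
   lexicographically smaller, so lex-minimality forces gcd(lambda) = 1. *)
Lemma lexmin_gcd l : is_partition l ->
  (forall mu, is_partition mu -> equivalent l mu -> lexle l mu) ->
  gcd_seq l = 1%N.
Proof.
move=> Hl Hlex; apply/eqP; apply: contraT => Hg.
set g := gcd_seq l.
have l0 := part_pos Hl (part_size Hl).
have g0 : (0 < g)%N := dvdn_gt0 l0 (gcd_seq_dvd l 0).
set mu := [seq (a %/ g)%N | a <- l].
have Hlmu i : (nth 0%N l i)%:R = g%:R * (nth 0%N mu i)%:R :> rat.
  case: (ltnP i (size l)) => Hi; last by rewrite !nth_default ?size_map ?mulr0.
  by rewrite (nth_map 0%N) // -natrM mulnC divnK // gcd_seq_dvd.
have Hmu : is_partition mu.
  case/and3P: Hl => H1 H2 /allP H3; apply/and3P; split.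
  - by rewrite size_map.
  - rewrite sorted_map; apply: sub_sorted H2 => a b /= Hab; exact: leq_div2r.
  - apply/(all_nthP 0%N) => i; rewrite size_map => Hi.
    rewrite (nth_map 0%N) // divn_gt0 // dvdn_leq ?gcd_seq_dvd //.
    exact: H3 (mem_nth 0%N Hi).
have Hle : lexle l mu.
  apply: Hlex => //; split; first by rewrite size_map.
  exists (pvec mu); split; first exact: inV_pvec.
  by apply: perpB_scale Hlmu; rewrite pnatr_eq0 -lt0n.
(* but the first part of lambda/g is smaller than that of lambda *)
move: Hle l0; rewrite /mu; case: (l) => [|a s] //=.
rewrite ltnNge leq_div /= => Hle a0; move: Hle; rewrite gtn_eqF // ltn_Pdiv //.
by move: g0 Hg; lia.
Qed.

(* If v in V_mu is proportional to lambda, v = c.lambda, then mu = |c|.lambda: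
   mu and |c|.lambda are both the nonincreasing rearrangement of |v|. *)
Lemma scaled_permutation l mu v (c : rat) :
  is_partition l -> is_partition mu -> size mu = size l -> inV mu v ->
  (forall a, (a < size l)%N -> (nth 0 v a)%:~R = c * (nth 0%N l a)%:R) ->
  forall j, (nth 0%N mu j)%:R = `|c| * (nth 0%N l j)%:R.
Proof.
move=> Hl Hmu Hsz Hv Hvl.
have Habs : map (fun z => (absz z)%:R : rat) v = map (fun a => `|c| * a%:R) l.
  have Hszv : size v = size l by case: Hv => ->.
  apply: (@eq_from_nth _ 0); rewrite !size_map // => a Ha.
  rewrite (nth_map 0) // (nth_map 0%N) -?Hszv // natr_absz intr_norm.
  by rewrite Hvl -?Hszv // normrM normr_nat.
have Hsorted : map (fun n => n%:R : rat) mu = map (fun a => `|c| * a%:R) l.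
  apply: (@sorted_eq _ (fun a b : rat => b <= a)).
  - by move=> a b d H1 H2; exact: le_trans H2 H1.
  - by move=> a b /andP [H1 H2]; apply: le_anti; rewrite H1 H2.
  - rewrite sorted_map; case/and3P: Hmu => _ H _.
    by apply: sub_sorted H => a b /=; rewrite ler_nat.
  - rewrite sorted_map; case/and3P: Hl => _ H _.
    by apply: sub_sorted H => a b /= Hab; rewrite ler_wpM2l // ler_nat.
  - rewrite -Habs (map_comp (fun n => n%:R) absz) perm_map // perm_sym.
    exact: inV_abs_perm.
move=> j; case: (ltnP j (size l)) => Hj.
  by rewrite -(nth_map 0%N 0 (fun n => n%:R)) ?Hsz // Hsorted (nth_map 0%N).
by rewrite !nth_default ?Hsz // mulr0.
Qed.

Lemma reduces_scaled mu l (r : rat) :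
  is_partition l -> size mu = size l -> r != 0 ->
  (forall j, (nth 0%N mu j)%:R = r * (nth 0%N l j)%:R) -> reduces mu l.
Proof.
move=> Hl Hsz r0 Hmul; split; first by rewrite Hsz.
exists (cast_ord (esym Hsz)); split; first by [].
exists (pvec l); split; first exact: inV_pvec.
by move=> x; rewrite perpB_cast -(perpB_scale _ r0 Hmul).
Qed.

Lemma incr_ord_ge m n (f : 'I_m -> 'I_n) :
  (forall i j : 'I_m, (i < j)%N -> (f i < f j)%N) ->
  forall i : 'I_m, (i <= f i)%N.
Proof.
move=> Hf i; have [k Hk] : exists k, val i = k by exists (val i).
elim: k i Hk => [|k IH] i Hk; first by rewrite Hk.
have Hk' : (k < m)%N by move: (ltn_ord i); rewrite Hk; lia.
have := IH (Ordinal Hk') erefl.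
have := Hf (Ordinal Hk') i; rewrite Hk /= ltnSn => /(_ isT) H1 H2.
exact: leq_ltn_trans H2 H1.
Qed.

Lemma incr_ord_id m n (f : 'I_m -> 'I_n) : m = n ->
  (forall i j : 'I_m, (i < j)%N -> (f i < f j)%N) ->
  forall i : 'I_m, val (f i) = val i.
Proof.
move=> Emn Hf i; apply/eqP; rewrite eqn_leq (incr_ord_ge Hf) andbT.
pose h (a : 'I_m) : 'I_n := rev_ord (f (rev_ord a)).
have Hh (a b : 'I_m) : (a < b)%N -> (h a < h b)%N.
  move=> Hab; have H : (rev_ord b < rev_ord a)%N.
    by rewrite /=; move: (ltn_ord a) (ltn_ord b) Hab; lia.
  have := ltn_ord (f (rev_ord a)); have := ltn_ord (f (rev_ord b)).
  by move: (Hf _ _ H) => /=; lia.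
have := incr_ord_ge Hh (rev_ord i); rewrite /= rev_ordK.
by move: (ltn_ord i) (ltn_ord (f i)) Emn; lia.
Qed.

Definition pullback k m (f : 'I_m -> 'I_k) (v : seq int) : 'rV[rat]_k :=
  \row_i \sum_(a | f a == i) (nth 0 v a)%:~R.

Lemma pullback_im k m (f : 'I_m -> 'I_k) v a :
  injective f -> pullback f v 0 (f a) = (nth 0 v a)%:~R.
Proof.
by move=> finj; rewrite mxE (big_pred1 a) // => b; rewrite /= (inj_eq finj).
Qed.

Lemma pullback_out k m (f : 'I_m -> 'I_k) v i :
  (forall a, f a != i) -> pullback f v 0 i = 0.
Proof. by move=> Hi; rewrite mxE big_pred0 // => a; exact: negbTE. Qed.

Lemma pullback_ker l m (f : 'I_m -> 'I_(size l)) v :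
  (forall x, x \in lamperp l -> [ffun j => x (f j)] \in perpB m v) ->
  pullback f v *m Amat l = 0.
Proof.
move=> Hproj; apply/Amat_kerP => x Hx.
have := Hproj x Hx; rewrite in_perpB => /eqP; apply: etrans.
rewrite [RHS](partition_big f xpredT) //=; apply: eq_bigr => i _.
by rewrite mxE mulr_suml; apply: eq_bigr => a /eqP fa; rewrite ffunE fa.
Qed.

(* With rank k-1, a reduction lambda => mu can be reversed: the pulled-back
   vector is c.lambda with c != 0, so f is onto, hence the identity, and mu is
   a rescaling of lambda. *)
Lemma rank_reduction_reverses l mu :
  is_partition l -> is_partition mu -> \rank (Amat l) = (size l).-1 ->
  reduces l mu -> reduces mu l.
Proof.
move=> Hl Hmu Hr [Hle [f [Hf [v [Hv Hproj]]]]].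
have finj : injective f.
  move=> a b Hab; apply/val_inj/eqP; apply: contraT; rewrite neq_ltn.
  by case/orP => /Hf; rewrite Hab ltnn.
have [c Hc] := ker_line Hl Hr (pullback_ker Hproj).
have Hpull i : pullback f v 0 i = c * (nth 0%N l i)%:R by rewrite Hc !mxE.
have c0 : c != 0.
  case: Hv => _ _; apply: contraTneq => c0.
  rewrite -(ltr0z rat) -[0%N]/(val (Ordinal (part_size Hmu))).
  rewrite -(pullback_im v _ finj).
  by rewrite Hpull c0 mul0r ltxx.
have f_onto i : [exists a, f a == i].
  apply: contraT; rewrite negb_exists => /forallP Hi.
  have := pullback_out v Hi; rewrite Hpull => /eqP.
  by rewrite mulf_eq0 (negbTE c0) pnatr_eq0 /= eqn0Ngt part_pos.
have Hsz : size mu = size l.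
  apply/eqP; rewrite eqn_leq Hle -[X in (X <= _)%N]card_ord -[size mu]card_ord.
  rewrite -(card_codom finj); apply: subset_leq_card; apply/subsetP => i _.
  by have /existsP [a /eqP <-] := f_onto i; exact: codom_f.
have Hvl a : (a < size l)%N -> (nth 0 v a)%:~R = c * (nth 0%N l a)%:R.
  rewrite -Hsz => Ha; have := pullback_im v (Ordinal Ha) finj.
  by rewrite Hpull (incr_ord_id Hsz Hf) => <-.
apply: reduces_scaled Hl Hsz _ (scaled_permutation Hl Hmu Hsz Hv Hvl).
by rewrite normr_eq0.
Qed.

Lemma lexle_mul n s : (0 < n)%N -> lexle s (map (muln n) s).
Proof.
move=> n0; elim: s => [|a s IH] //=.
case: (ltnP a (n * a)) => //= H.
by rewrite (_ : a == n * a) ?IH // eqn_leq H leq_pmull.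
Qed.

(* With rank k-1 and gcd 1, an equivalent partition is an integral multiple
   n.lambda, which is lexicographically at least lambda. *)
Lemma rank_gcd_lexmin l : is_partition l -> \rank (Amat l) = (size l).-1 ->
  gcd_seq l = 1%N -> forall mu, is_partition mu -> equivalent l mu -> lexle l mu.
Proof.
move=> Hl Hr Hg mu Hmu [Hsz [w [Hw Hperp]]].
pose u : 'rV[rat]_(size l) := \row_i (nth 0 w i)%:~R.
have uA : u *m Amat l = 0.
  apply/Amat_kerP => x; rewrite Hperp in_perpB => /eqP H; apply: etrans H.
  by apply: eq_bigr => i _; rewrite mxE.
have [c Hc] := ker_line Hl Hr uA.
have Hwl a : (a < size l)%N -> (nth 0 w a)%:~R = c * (nth 0%N l a)%:R.
  by move=> Ha; move/rowP: Hc => /(_ (Ordinal Ha)); rewrite !mxE.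
have /natrP [n Hn] : `|c| \is a Num.nat.
  apply: natr_norm_int; have := @gcd_seq_int l c; rewrite Hg mulr1; apply.
  by move=> i Hi; rewrite -Hwl // intr_int.
have Hmul := scaled_permutation Hl Hmu (esym Hsz) Hw Hwl.
have n0 : (0 < n)%N.
  have := part_pos Hmu (part_size Hmu); rewrite -(ltr0n rat) Hmul Hn.
  by rewrite lt0n; apply: contraTneq => ->; rewrite mul0r ltxx.
suff -> : mu = map (muln n) l by exact: lexle_mul.
apply: (@eq_from_nth _ 0%N); first by rewrite size_map.
move=> j Hj; apply/eqP; rewrite -(eqr_nat rat) Hmul Hn (nth_map 0%N) ?natrM //.
by rewrite Hsz.
Qed.

Local Close Scope ring_scope.

Theorem mainTheorem3 (l : seq nat) :
  is_partition l -> lamperp l != set0 ->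
  (novel l <-> \rank (Amat l) = (size l).-1 /\ gcd_seq l = 1).
Proof.
move=> Hl Hne; split.
- case=> _ Hnr Hlex; split; first exact: no_strict_reduction_rank.
  exact: lexmin_gcd.
- case=> Hr Hg; split=> //.
  + move=> mu Hmu [Hred []]; exact: rank_reduction_reverses.
  + exact: rank_gcd_lexmin.
Qed.
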